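(* Let $n\ge4$, $2\le p\le n-1$, $j=n-p+1$. Let $\textnormal{Reg}(\mathcal{OCT}_n)$ be the set of regular elements of $\mathcal{OCT}_n$, $L(n,p)=\{\alpha\in\textnormal{Reg}(\mathcal{OCT}_n):|\textnormal{Im}\,\alpha|\le p\}$, $K_p=\{\alpha\in\textnormal{Reg}(\mathcal{OCT}_n):|\textnormal{Im}\,\alpha|=p\}$, and let $Q_p=K_p\cup\{0\}$ be the Rees quotient $L(n,p)/L(n,p-1)$, with product $\alpha*\beta=\alpha\beta$ if $|\textnormal{Im}(\alpha\beta)|=p$ and $\alpha*\beta=0$ otherwise. Define $\eta,\delta\in\mathcal{T}_n$ by: $x\eta=1$ for $1\le x\le j$ and $(j+i)\eta=i+1$ for $1\le i\le p-1$; $x\delta=x$ for $1\le x\le p-1$ and $x\delta=p$ for $p\le x\le n$. Let $R_\eta=\{\alpha\in K_p:\textnormal{Im}\,\alpha=\textnormal{Im}\,\eta\}$ and $L_\delta=\{\alpha\in K_p:\ker\alpha=\ker\delta\}$. Then $(R_\eta\cup L_\delta)\setminus\{\delta\}$ is a minimal generating set of the semigroup $Q_p$ (it generates $Q_p$ and no proper subset of it does).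
   Context: Maps are written on the right and composed left to right: $x(\alpha\beta)=(x\alpha)\beta$. $\mathcal{T}_n$ is the full transformation semigroup on $[n]=\{1,\dots,n\}$. $\alpha$ is a contraction if $|x\alpha-y\alpha|\le|x-y|$ for all $x,y$, order-preserving if $x\le y\Rightarrow x\alpha\le y\alpha$. $\mathcal{OCT}_n$ is the semigroup of order-preserving contractions; $\alpha\in\mathcal{OCT}_n$ is regular if $\alpha\beta\alpha=\alpha$ for some $\beta\in\mathcal{OCT}_n$ (these form a subsemigroup). $\ker\alpha=\{(x,y):x\alpha=y\alpha\}$. *)

(* Transformations of [n] = {1..n} are modelled as
   finite functions on 'I_n = {0..n-1} (shift by one; contraction and
   order-preservation are translation invariant). *)
From mathcomp Require Import all_boot.
Set Implicit Arguments. Unset Strict Implicit. Unset Printing Implicit Defensive.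

Notation tr n := {ffun 'I_n -> 'I_n}.

(* maps on the right: x (a b) = (x a) b *)
Definition tmul n (a b : tr n) : tr n := [ffun x => b (a x)].

Definition distn (x y : nat) : nat := (x - y) + (y - x).

Definition is_contraction n (a : tr n) : bool :=
  [forall x : 'I_n, forall y : 'I_n, distn (a x) (a y) <= distn x y].

Definition is_order_preserving n (a : tr n) : bool :=
  [forall x : 'I_n, forall y : 'I_n, (x <= y) ==> (a x <= a y)].

Definition in_OCT n (a : tr n) : bool := is_order_preserving a && is_contraction a.

Definition is_regular_OCT n (a : tr n) : bool :=
  in_OCT a && [exists b : tr n, in_OCT b && (tmul (tmul a b) a == a)].

Definition imset_of n (a : tr n) : {set 'I_n} := [set a x | x : 'I_n].
Definition rank n (a : tr n) : nat := #|imset_of a|.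

Definition same_kernel n (a b : tr n) : bool :=
  [forall x : 'I_n, forall y : 'I_n, (a x == a y) == (b x == b y)].

Definition Kp n p : {set tr n} := [set a | is_regular_OCT a && (rank a == p)].

(* Q_p = K_p u {0}, with 0 represented by None *)
Definition Qp n p : {set option (tr n)} :=
  [set o | if o is Some a then a \in Kp n p else true].

Definition qmul n p (u v : option (tr n)) : option (tr n) :=
  match u, v with
  | Some a, Some b => if rank (tmul a b) == p then Some (tmul a b) else None
  | _, _ => None
  end.

Inductive generated n p (G : {set option (tr n)}) : option (tr n) -> Prop :=
  | gen_base u : u \in G -> generated p G u
  | gen_mul u v : generated p G u -> generated p G v -> generated p G (qmul p u v).

Definition generates n p (G : {set option (tr n)}) : Prop :=
  forall u, u \in Qp n p -> generated p G u.

(* 1-based: x eta = 1 for x <= j, (j+i) eta = i+1; 0-based: x |-> x - (n-p) *)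
Definition eta_map n p : tr n :=
  [ffun x : 'I_n => Ordinal (leq_ltn_trans (leq_subr (n - p) x) (ltn_ord x))].

(* 1-based: x delta = min(x, p); 0-based: x |-> min(x, p-1) *)
Definition delta_map n p : tr n :=
  [ffun x : 'I_n => Ordinal (leq_ltn_trans (geq_minl x (p.-1)) (ltn_ord x))].

Definition R_eta n p : {set tr n} :=
  [set a in Kp n p | imset_of a == imset_of (eta_map n p)].
Definition L_delta n p : {set tr n} :=
  [set a in Kp n p | same_kernel a (delta_map n p)].

Definition gen_set n p : {set option (tr n)} :=
  [set Some a | a in (R_eta n p :|: L_delta n p) :\ delta_map n p].

(* Every regular element of OCT_n of rank p is a staircase
   x |-> s + min((x - k)^+, p - 1): if a b a = a with b in OCT_n, then b sends
   min Im a and max Im a to points at distance exactly |Im a| - 1, because a and b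
   both contract, so a rises by one at each step in between.  Hence K_p is indexed
   by pairs (k, s), and Q_p is the Brandt semigroup (k, s) * (k', s') = (k, s')
   if s = k' and 0 otherwise.  R_eta consists of the pairs with s = 0, L_delta of
   those with k = 0, and delta = (0, 0).  Every (k, s) is a product (k, t) * (t, s) of two
   generators, and a product keeps the first index of its left factor and the
   second index of its right factor, so the generator (k, 0) with k <> 0 (or
   (0, s) with s <> 0) is a product only of factors among which it occurs. *)

From mathcomp Require Import all_boot zify.
Set Implicit Arguments. Unset Strict Implicit. Unset Printing Implicit Defensive.

Lemma in_OCTP n (a : tr n) :
  reflect ((forall x y : 'I_n, x <= y -> a x <= a y) /\
           (forall x y : 'I_n, distn (a x) (a y) <= distn x y))
          (in_OCT a).
Proof.
apply: (iffP andP) => [[/forallP mono /forallP contr]|[mono contr]]; split.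
- by move=> x y; apply/implyP; move/forallP: (mono x).
- by move=> x y; move/forallP: (contr x).
- by apply/forallP => x; apply/forallP => y; apply/implyP; apply: mono.
- by apply/forallP => x; apply/forallP => y; apply: contr.
Qed.

Lemma card_ord_interval N lo hi : hi <= N.+1 ->
  #|[set y : 'I_N.+1 | lo <= y < hi]| = hi - lo.
Proof.
move=> hiN; pose f (i : 'I_(hi - lo)) : 'I_N.+1 := inord (lo + i).
have f_inj : injective f.
  move=> i j; have := ltn_ord i; have := ltn_ord j => jlt ilt /(congr1 val) /=.
  by rewrite !inordK; try lia; move=> e; apply/val_inj => /=; lia.
rewrite -[hi - lo]card_ord -(card_imset _ f_inj); apply: eq_card => y.
rewrite inE; apply/idP/imsetP => [y_in | [i _ ->]].
- have i_lt : y - lo < hi - lo by lia.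
  exists (Ordinal i_lt) => //; apply/val_inj => /=.
  by rewrite /f inordK /=; lia.
- by have ilt := ltn_ord i; rewrite /f inordK; lia.
Qed.

Section Staircase.

Variable m : nat.

Definition stair (k s q : nat) : tr m.+1 :=
  [ffun x : 'I_m.+1 => inord (s + minn (x - k) q)].

Lemma stairE k s q x : s + q <= m -> stair k s q x = s + minn (x - k) q :> nat.
Proof. by move=> sq; rewrite ffunE inordK //; lia. Qed.

Lemma stair_OCT k s q : s + q <= m -> in_OCT (stair k s q).
Proof.
by move=> sq; apply/in_OCTP; split=> [x y|x y]; rewrite /distn !stairE //; lia.
Qed.

Lemma stair_mul k s s' q : s + q <= m -> s' + q <= m ->
  tmul (stair k s q) (stair s s' q) = stair k s' q.
Proof.
by move=> sq s'q; apply/ffunP => x; apply/val_inj; rewrite /= ffunE !stairE //; lia.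
Qed.

Lemma stair_kernel k s q x y : s + q <= m ->
  (stair k s q x == stair k s q y) = (minn (x - k) q == minn (y - k) q).
Proof. by move=> sq; rewrite -val_eqE /= !stairE // eqn_add2l. Qed.

Lemma imset_stair k s q : k + q <= m -> s + q <= m ->
  imset_of (stair k s q) = [set y : 'I_m.+1 | s <= y < s + q.+1].
Proof.
move=> kq sq; apply/setP => y; rewrite inE.
apply/imsetP/idP => [[x _ ->] | y_in]; first by rewrite stairE //; lia.
by exists (inord (k + (y - s))) => //; apply/val_inj => /=; rewrite stairE // inordK; lia.
Qed.

Lemma stair_rank k s q : k + q <= m -> s + q <= m -> rank (stair k s q) = q.+1.
Proof. by move=> kq sq; rewrite /rank imset_stair // card_ord_interval; lia. Qed.

(* The image [s, s + q] of the left factor is not the interval [k', k' + q]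
   on which the right factor is injective. *)
Lemma stair_mul_rank (k s k' s' q : nat) :
  0 < q -> s + q <= m -> s' + q <= m -> s != k' ->
  rank (tmul (stair k s q) (stair k' s' q)) <= q.
Proof.
move=> q_gt0 sq s'q s_k'; set c := tmul _ _.
have cE x : c x = s' + minn (s + minn (x - k) q - k') q :> nat.
  by rewrite ffunE !stairE.
have [lo [loq c_in]] : exists lo, lo + q <= m.+1 /\ forall x, lo <= c x < lo + q.
  case: (ltngtP s k') s_k' => // s_k' _.
  - by exists s'; split=> [|x]; rewrite ?cE; lia.
  - by exists s'.+1; split=> [|x]; rewrite ?cE; lia.
rewrite /rank -[q](addKn lo) -(@card_ord_interval m) //; apply: subset_leq_card.
by apply/subsetP => _ /imsetP [x _ ->]; rewrite inE c_in.
Qed.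

Lemma stair_regular k s q : k + q <= m -> s + q <= m -> is_regular_OCT (stair k s q).
Proof.
move=> kq sq; rewrite /is_regular_OCT stair_OCT //; apply/existsP.
by exists (stair s k q); rewrite stair_OCT //= !stair_mul.
Qed.

Lemma regular_OCT_stair (a : tr m.+1) : is_regular_OCT a ->
  exists k s d, [/\ k + d <= m, s + d <= m & a = stair k s d].
Proof.
case/andP => /in_OCTP [amono acontr] a_reg.
have [b /in_OCTP [bmono bcontr] aba] :
    exists2 b : tr m.+1, in_OCT b & tmul (tmul a b) a = a.
  by case/existsP: a_reg => b /andP [bOCT /eqP aba]; exists b.
have abaE x : a (b (a x)) = a x by rewrite -[in RHS]aba !ffunE.
set s := a ord0; set M := a ord_max.
have [abs abM] : a (b s) = s /\ a (b M) = M by rewrite !abaE.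
have sM : s <= M by apply: amono.
have := bmono _ _ sM; have := acontr (b M) (b s); have := bcontr M s.
rewrite abs abM /distn => bcontrM acontrM bsM.
have b_span : b M = b s + (M - s) :> nat by lia.
have bM_lt := ltn_ord (b M); have M_lt := ltn_ord M.
exists (b s), s, (M - s); split; [lia | lia |].
apply/ffunP => x; apply/val_inj => /=; rewrite stairE; last by lia.
have := amono ord0 x (leq0n x); have := amono x ord_max (leq_ord x).
have := amono x (b s); have := amono (b M) x.
have := acontr x (b s); have := acontr x (b M).
by rewrite abs abM -/s -/M /distn; lia.
Qed.

Lemma stair_imset_inj k s k' s' q : k + q <= m -> s + q <= m ->
  k' + q <= m -> s' + q <= m ->
  imset_of (stair k s q) = imset_of (stair k' s' q) -> s = s'.
Proof.
move=> kq sq k'q s'q /setP img.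
have := img (inord s); have := img (inord s').
by rewrite !imset_stair // !inE !inordK; lia.
Qed.

Lemma stair_kernel_inj k s k' s' q : 0 < q -> k + q <= m -> s + q <= m ->
  k' + q <= m -> s' + q <= m ->
  same_kernel (stair k s q) (stair k' s' q) -> k = k'.
Proof.
move=> q_gt0 kq sq k'q s'q /forallP ker.
have := ker (inord k) => /forallP /(_ ord0); have := ker (inord k') => /forallP /(_ ord0).
by rewrite !stair_kernel // /= !inordK; lia.
Qed.

Lemma stair_inj k s k' s' q : 0 < q -> k + q <= m -> s + q <= m ->
  k' + q <= m -> s' + q <= m ->
  stair k s q = stair k' s' q -> k = k' /\ s = s'.
Proof.
move=> q_gt0 kq sq k'q s'q e; split.
- apply: (stair_kernel_inj q_gt0 kq sq k'q s'q); rewrite e.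
  by apply/forallP => x; apply/forallP => y.
- exact: stair_imset_inj kq sq k'q s'q (congr1 (@imset_of _) e).
Qed.

End Staircase.

Section ReesQuotient.

Variables m q : nat.
Hypotheses (q_gt0 : 0 < q) (q_lt_m : q < m).

Local Notation st k s := (stair m k s q).

Lemma qmul_stair k s k' s' : k + q <= m -> s + q <= m -> s' + q <= m ->
  qmul q.+1 (Some (st k s)) (Some (st k' s')) = if s == k' then Some (st k s') else None.
Proof.
move=> kq sq s'q; rewrite /qmul; case: (eqVneq s k') => [<- | s_k'].
- by rewrite stair_mul // stair_rank // eqxx.
- by rewrite ifN // neq_ltn ltnS stair_mul_rank.
Qed.

Lemma Kp_stairP a :
  a \in Kp m.+1 q.+1 <-> exists k s, [/\ k + q <= m, s + q <= m & a = st k s].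
Proof.
rewrite inE; split=> [/andP [] | [k [s [kq sq ->]]]].
- case/regular_OCT_stair => [k [s [d [kd sd ->]]]].
  by rewrite stair_rank // eqSS => /eqP dq; subst d; exists k, s.
- by rewrite stair_regular // stair_rank // eqxx.
Qed.

Lemma eta_map_stair : eta_map m.+1 q.+1 = st (m - q) 0.
Proof.
apply/ffunP => x; apply/val_inj => /=; rewrite stairE; last lia.
by rewrite ffunE /=; have := ltn_ord x; lia.
Qed.

Lemma delta_map_stair : delta_map m.+1 q.+1 = st 0 0.
Proof. by apply/ffunP => x; apply/val_inj => /=; rewrite stairE ?ffunE /=; lia. Qed.

Lemma gen_setP u : u \in gen_set m.+1 q.+1 <->
  exists k s, [/\ k + q <= m, s + q <= m, (k == 0) != (s == 0) & u = Some (st k s)].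
Proof.
split=> [/imsetP [a /setD1P [a_delta a_RL] ->] | [k [s [kq sq ks ->]]]].
- have [k [s [kq sq a_def]]] : exists k s, [/\ k + q <= m, s + q <= m & a = st k s].
    by apply/Kp_stairP; case/setUP: a_RL => /setIdP [].
  exists k, s; split => //; last by rewrite a_def.
  have not_delta : ~~ ((k == 0) && (s == 0)).
    apply: contra a_delta => /andP [/eqP k0 /eqP s0].
    by rewrite a_def delta_map_stair k0 s0.
  case/setUP: a_RL => /setIdP [_]; rewrite a_def.
  + rewrite eta_map_stair => /eqP /stair_imset_inj s0.
    by have := s0 kq sq ltac:(lia) ltac:(lia); lia.
  + rewrite delta_map_stair => /stair_kernel_inj k0.
    by have := k0 q_gt0 kq sq ltac:(lia) ltac:(lia); lia.
- apply/imsetP; exists (st k s) => //; apply/setD1P; split.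
  + by rewrite delta_map_stair; apply/eqP => /stair_inj; lia.
  + have st_Kp : st k s \in Kp m.+1 q.+1 by apply/Kp_stairP; exists k, s.
    apply/setUP; case: (eqVneq s 0) => [s0 | s_ne0]; [left | right]; apply/setIdP.
    * split => //; rewrite eta_map_stair !imset_stair ?s0 ?eqxx //; lia.
    * have k0 : k = 0 by lia.
      split => //; rewrite delta_map_stair k0.
      by apply/forallP => x; apply/forallP => y; rewrite !stair_kernel //; lia.
Qed.

Lemma gen_set_generates : generates q.+1 (gen_set m.+1 q.+1).
Proof.
have gen k s : k + q <= m -> s + q <= m -> (k == 0) != (s == 0) ->
    generated q.+1 (gen_set m.+1 q.+1) (Some (st k s)).
  by move=> kq sq ks; apply/gen_base/gen_setP; exists k, s.
case=> [a | _].
- rewrite inE => /Kp_stairP [k [s [kq sq ->]]].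
  have [ks | ks] := boolP ((k == 0) != (s == 0)); first exact: gen.
  have [t [tq kt ts]] :
      exists t, [/\ t + q <= m, (k == 0) != (t == 0) & (t == 0) != (s == 0)].
    by case: (eqVneq k 0) => ?; [exists 1 | exists 0]; split; lia.
  have <- : qmul q.+1 (Some (st k t)) (Some (st t s)) = Some (st k s).
    by rewrite qmul_stair // eqxx.
  by apply: gen_mul; apply: gen.
- have <- : qmul q.+1 (Some (st 1 0)) (Some (st 1 0)) = None.
    by rewrite qmul_stair //; lia.
  by apply: gen_mul; apply: gen; lia.
Qed.

Definition stair_with (P : nat -> nat -> bool) (u : option (tr m.+1)) : Prop :=
  if u is Some a then exists k s, [/\ k + q <= m, s + q <= m, P k s & a = st k s]
  else True.

Lemma generated_stair_with (P : nat -> nat -> bool) (T : {set option (tr m.+1)}) :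
  (forall k s k' s', P k s -> P k' s' -> P k s') ->
  {in T, forall u, stair_with P u} -> forall u, generated q.+1 T u -> stair_with P u.
Proof.
move=> P_comb T_P u; elim=> [v /T_P // | [a|] [b|] _ IHa _ IHb] //.
case: IHa IHb => [k [s [kq sq Pks ->]]] [k' [s' [k'q s'q Pks' ->]]].
rewrite qmul_stair //; case: eqP => // _.
by exists k, s'; split => //; apply: P_comb Pks Pks'.
Qed.

Lemma gen_set_minimal (T : {set option (tr m.+1)}) :
  T \proper gen_set m.+1 q.+1 -> ~ generates q.+1 T.
Proof.
case/properP => T_sub [g g_gen g_T] T_gen.
have [k0 [s0 [k0q s0q ks0 g_def]]] := (gen_setP g).1 g_gen.
pose P k s := if s0 == 0 then k != k0 else s != s0.
have P_comb k s k' s' : P k s -> P k' s' -> P k s' by rewrite /P; case: ifP.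
have T_P : {in T, forall u, stair_with P u}.
  move=> u u_T; have [k [s [kq sq ks u_def]]] := (gen_setP u).1 (subsetP T_sub u u_T).
  rewrite u_def; exists k, s; split => //; apply: contraT => notP.
  have [k_k0 s_s0] : k = k0 /\ s = s0 by move: notP; rewrite /P; case: ifP; lia.
  by move: g_T; rewrite g_def -k_k0 -s_s0 -u_def u_T.
have g_Qp : g \in Qp m.+1 q.+1 by rewrite g_def inE; apply/Kp_stairP; exists k0, s0.
have := generated_stair_with P_comb T_P (T_gen g g_Qp).
rewrite g_def => -[k [s [kq sq Pks /stair_inj]]] [] // k0_k s0_s.
by move: Pks; rewrite /P -k0_k -s0_s !eqxx; case: ifP.
Qed.

End ReesQuotient.

Theorem lemma8 (n p : nat) :
  4 <= n -> 2 <= p <= n.-1 ->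
  generates p (gen_set n p) /\
  (forall T : {set option (tr n)}, T \proper gen_set n p -> ~ generates p T).
Proof.
case: n p => [|m] [|q] // _ /andP [q_gt0 q_lt_m].
split; [exact: gen_set_generates | exact: gen_set_minimal].
Qed.
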